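(* Let $\epsilon\in[0,1]$. If $\epsilon\ge 1-1/\sqrt2$, then the noisy projected number POVM $\mathsf N^{\rm prono}$ and the noisy projected canonical phase POVM $\Phi$, both with noise parameter $\epsilon$, are jointly measurable.
   Context: All operators act on $\mathbb C^2$. $\mathsf N^{\rm prono}_0=\begin{pmatrix}1-\epsilon/2&0\\0&\epsilon/2\end{pmatrix}$, $\mathsf N^{\rm prono}_1=\begin{pmatrix}\epsilon/2&0\\0&1-\epsilon/2\end{pmatrix}$. For Borel $X\subseteq[0,2\pi)$, $\Phi(X)=\int_X\begin{pmatrix}1&(1-\epsilon)e^{-i\theta}\\(1-\epsilon)e^{i\theta}&1\end{pmatrix}\frac{d\theta}{2\pi}$. Joint measurability means existence of a POVM $\mathsf M$ on $\{0,1\}\times[0,2\pi)$ with $\mathsf M(\{n\}\times[0,2\pi))=\mathsf N^{\rm prono}_n$ for $n=0,1$ and $\mathsf M(\{0,1\}\times X)=\Phi(X)$ for all Borel $X$. *)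

From HB Require Import structures.
From mathcomp Require Import all_boot all_order all_algebra.
From mathcomp Require Import all_classical all_reals all_analysis.
From mathcomp Require Import complex.
Set Implicit Arguments. Unset Strict Implicit. Unset Printing Implicit Defensive.
Import Order.TTheory GRing.Theory Num.Theory.
Import numFieldNormedType.Exports.
Local Open Scope classical_set_scope.
Local Open Scope ring_scope.
Local Open Scope complex_scope.

Section Defs.
Variable R : realType.
Local Notation C := R[i].

Definition psd (A : 'M[C]_2) : Prop :=
  forall v : 'cV[C]_2, 0 <= ((\row_j (v j 0)^*) *m A *m v) 0 0.

Definition complex_cvg (u : nat -> C) (l : C) : Prop :=
  (fun n => complex.Re (u n)) @ \oo --> complex.Re l /\
  (fun n => complex.Im (u n)) @ \oo --> complex.Im l.

(** A POVM on the measurable subset [D] of a measurable space [T]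
    (i.e. on [D] with its trace sigma-algebra): defined on measurable subsets
    of [D], positive, normalized, and countably additive (entrywise,
    equivalently in any operator topology since dim = 2). *)
Definition povm_on d (T : measurableType d) (D : set T)
    (M : set T -> 'M[C]_2) : Prop :=
  [/\ M D = 1,
      (forall A, measurable A -> A `<=` D -> psd (M A)) &
      (forall F : nat -> set T,
         (forall k, measurable (F k)) -> (forall k, F k `<=` D) ->
         trivIset setT F ->
         forall i j : 'I_2,
           complex_cvg (fun n => \sum_(k < n) M (F k) i j)
                       (M (\bigcup_k F k) i j))].

Definition I02pi : set R := `[0, 2 * pi[%classic.

(** Noisy projected number POVM; outcome [false] is n = 0, [true] is n = 1. *)
Definition Nprono (eps : R) (n : bool) : 'M[C]_2 :=
  if n then \matrix_(i < 2, j < 2)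
              (if i == j then (if i == 0 :> nat then (eps / 2)%:C
                               else (1 - eps / 2)%:C) else 0)
  else \matrix_(i < 2, j < 2)
              (if i == j then (if i == 0 :> nat then (1 - eps / 2)%:C
                               else (eps / 2)%:C) else 0).

Definition phi_density (eps : R) (theta : R) : 'M[C]_2 :=
  \matrix_(i < 2, j < 2)
    (if i == j then 1
     else if i == 0 :> nat then (1 - eps)%:C * (cos theta +i* (- sin theta))
     else (1 - eps)%:C * (cos theta +i* sin theta)).

Definition Phi (eps : R) (X : set R) : 'M[C]_2 :=
  \matrix_(i < 2, j < 2)
    ((Rintegral lebesgue_measure X
        (fun theta => complex.Re (phi_density eps theta i j)) / (2 * pi))
     +i* (Rintegral lebesgue_measure X
        (fun theta => complex.Im (phi_density eps theta i j)) / (2 * pi))).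

Definition jointly_measurable_prono_phase (eps : R) : Prop :=
  exists M : set (bool * R) -> 'M[C]_2,
    [/\ povm_on (setT `*` I02pi) M,
        (forall n : bool, M ([set n] `*` I02pi) = Nprono eps n) &
        (forall X : set R, measurable X -> X `<=` I02pi ->
           M (setT `*` X) = Phi eps X)].

End Defs.

(* On outcome n the joint observable has density, with respect to dθ/2π on [0, 2π),
     [[w_n, c e^{-iθ}], [c e^{iθ}, w_{1-n}]],   w_0 = 1 - ε/2,  w_1 = ε/2,  c = (1 - ε)/2.
   Summing over n gives the density of Φ, and integrating over θ kills the
   off-diagonal entries, leaving N^prono_n.  The density is positive iff
   c^2 <= w_0 w_1, i.e. 2 (1 - ε)^2 <= 1, which is exactly ε >= 1 - 1/√2. *)

From HB Require Import structures.
From mathcomp Require Import all_boot all_order all_algebra.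
From mathcomp Require Import all_classical all_reals all_analysis.
From mathcomp Require Import complex.
From mathcomp Require Import ring lra.
Import Order.TTheory GRing.Theory Num.Theory.
Import numFieldNormedType.Exports.
Local Open Scope classical_set_scope.
Local Open Scope ring_scope.

Section Herm2.
Context {R : realType}.
Local Notation C := R[i].
Local Open Scope complex_scope.

Definition herm2 (a b c d : R) : 'M[C]_2 :=
  \matrix_(i < 2, j < 2)
    (if i == j then (if i == 0 :> nat then a%:C else d%:C)
     else if i == 0 :> nat then b +i* (- c) else b +i* c).

Definition herm2_qform (a b c d x0 y0 x1 y1 : R) : R :=
  a * (x0 ^+ 2 + y0 ^+ 2) + d * (x1 ^+ 2 + y1 ^+ 2)
  + 2 * (b * (x0 * x1 + y0 * y1) + c * (x0 * y1 - y0 * x1)).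

Lemma herm2_qformE a b c d (v : 'cV[C]_2) :
  ((\row_j (v j 0)^*) *m herm2 a b c d *m v) 0 0 =
  (herm2_qform a b c d (complex.Re (v 0 0)) (complex.Im (v 0 0))
                       (complex.Re (v 1 0)) (complex.Im (v 1 0)))%:C.
Proof.
have -> : v = \col_i (if i == 0 then v 0 0 else v 1 0).
  apply/matrixP => i j; rewrite !mxE !ord1.
  by case: i => [[|[|//]] ?]; congr (v _ _); apply: val_inj.
move: (v 0 0) (v 1 0) => [x0 y0] [x1 y1].
rewrite !mxE !big_ord_recr !big_ord0 /= !mxE !big_ord_recr !big_ord0 /= !mxE /=.
by apply/eqP; rewrite eq_complex /=; apply/andP; split; apply/eqP;
  rewrite /herm2_qform; ring.
Qed.

Lemma psd_herm2P a b c d :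
  psd (herm2 a b c d) <-> forall x0 y0 x1 y1, 0 <= herm2_qform a b c d x0 y0 x1 y1.
Proof.
split=> [hA x0 y0 x1 y1 | hq v]; last by rewrite herm2_qformE lecE /= eqxx hq.
have := hA (\col_i (if i == 0 then x0 +i* y0 else x1 +i* y1)).
by rewrite herm2_qformE !mxE /= lecE /= => /andP[].
Qed.

Lemma psd_herm2 a b c d :
  0 <= a -> 0 <= d -> b ^+ 2 + c ^+ 2 <= a * d -> psd (herm2 a b c d).
Proof.
move=> a0 d0 bcad; apply/psd_herm2P => x0 y0 x1 y1; rewrite /herm2_qform.
set X := x0 ^+ 2 + y0 ^+ 2; set Y := x1 ^+ 2 + y1 ^+ 2.
set p := x0 * x1 + y0 * y1; set q := x0 * y1 - y0 * x1.
have X0 : 0 <= X by rewrite addr_ge0 ?sqr_ge0.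
have Y0 : 0 <= Y by rewrite addr_ge0 ?sqr_ge0.
have pqXY : p ^+ 2 + q ^+ 2 = X * Y by rewrite /p /q /X /Y; ring.
have CS : (b * p + c * q) ^+ 2 <= (b ^+ 2 + c ^+ 2) * (X * Y).
  rewrite -pqXY -subr_ge0.
  have -> : (b ^+ 2 + c ^+ 2) * (p ^+ 2 + q ^+ 2) - (b * p + c * q) ^+ 2
          = (b * q - c * p) ^+ 2 by ring.
  exact: sqr_ge0.
have AMGM : 4 * (a * d * (X * Y)) <= (a * X + d * Y) ^+ 2.
  rewrite -subr_ge0.
  have -> : (a * X + d * Y) ^+ 2 - 4 * (a * d * (X * Y)) = (a * X - d * Y) ^+ 2 by ring.
  exact: sqr_ge0.
have : (b ^+ 2 + c ^+ 2) * (X * Y) <= a * d * (X * Y) by rewrite ler_wpM2r ?mulr_ge0.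
have : 0 <= a * X + d * Y by rewrite addr_ge0 ?mulr_ge0.
nra.
Qed.

Lemma herm2D a b c d a' b' c' d' : herm2 a b c d + herm2 a' b' c' d' =
  herm2 (a + a') (b + b') (c + c') (d + d') :> 'M[C]_2.
Proof.
apply/matrixP => i j; rewrite !mxE.
by case: ifP => _; [case: ifP => _|case: ifP => _]; apply/eqP;
  rewrite eq_complex /= ?opprD ?addr0 ?eqxx.
Qed.

Lemma herm20 : herm2 0 0 0 0 = 0 :> 'M[C]_2.
Proof.
apply/matrixP => i j; rewrite !mxE.
by case: ifP => _; [case: ifP => _|case: ifP => _]; apply/eqP;
  rewrite eq_complex /= ?oppr0 ?eqxx.
Qed.

Lemma herm2_sum I (r : seq I) (a b c d : I -> R) :
  \sum_(i <- r) herm2 (a i) (b i) (c i) (d i) =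
  herm2 (\sum_(i <- r) a i) (\sum_(i <- r) b i) (\sum_(i <- r) c i) (\sum_(i <- r) d i).
Proof.
elim: r => [|x r IH]; first by rewrite !big_nil herm20.
by rewrite !big_cons IH herm2D.
Qed.

Lemma herm2Z k a b c d :
  k%:C *: herm2 a b c d = herm2 (k * a) (k * b) (k * c) (k * d) :> 'M[C]_2.
Proof.
apply/matrixP => i j; rewrite !mxE.
case: i => [[|[|//]] ?]; case: j => [[|[|//]] ?] //=; apply/eqP;
  by rewrite eq_complex /= !mul0r !subr0 ?addr0 ?mulr0 ?mulrN !eqxx.
Qed.

Lemma herm2_1 : herm2 1 0 0 (1 : R) = 1.
Proof.
apply/matrixP => i j; rewrite !mxE.
by case: i => [[|[|//]] ?]; case: j => [[|[|//]] ?] //=; apply/eqP;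
  rewrite eq_complex /= ?oppr0 ?eqxx.
Qed.

Lemma Re_herm2 (a b c d : R) (i j : 'I_2) : complex.Re (herm2 a b c d i j) =
  if i == j then (if i == 0 :> nat then a else d) else b.
Proof. by rewrite mxE; case: i => [[|[|//]] ?]; case: j => [[|[|//]] ?]. Qed.

Lemma Im_herm2 (a b c d : R) (i j : 'I_2) : complex.Im (herm2 a b c d i j) =
  if i == j then 0 else if i == 0 :> nat then - c else c.
Proof. by rewrite mxE; case: i => [[|[|//]] ?]; case: j => [[|[|//]] ?]. Qed.

End Herm2.

Section PsdCone.
Context {R : realType}.
Local Notation C := R[i].
Local Open Scope complex_scope.

Lemma psd0 : psd (0 : 'M[C]_2).
Proof. by move=> v; rewrite mulmx0 mul0mx mxE. Qed.

Lemma psdD (A B : 'M[C]_2) : psd A -> psd B -> psd (A + B).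
Proof. by move=> hA hB v; rewrite mulmxDr mulmxDl mxE addr_ge0. Qed.

Lemma psd_sum I (r : seq I) (A : I -> 'M[C]_2) :
  (forall i, psd (A i)) -> psd (\sum_(i <- r) A i).
Proof.
move=> hA; elim: r => [|i r IH]; first by rewrite big_nil; exact: psd0.
by rewrite big_cons; apply: psdD.
Qed.

Lemma psdZ (k : R) (A : 'M[C]_2) : 0 <= k -> psd A -> psd (k%:C *: A).
Proof.
move=> k0 hA v; rewrite -scalemxAr -scalemxAl mxE mulr_ge0 //.
by rewrite lecE /= eqxx k0.
Qed.

End PsdCone.

Section SigmaAdditiveReal.
Context {d : measure_display} {T : measurableType d} {R : realType}.

Definition sigma_additive_real (f : set T -> R) :=
  forall F : nat -> set T, (forall k, measurable (F k)) -> trivIset setT F ->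
  (fun n => \sum_(k < n) f (F k)) @ \oo --> f (\bigcup_k F k).

Lemma sigma_additive_realD (f g : set T -> R) :
  sigma_additive_real f -> sigma_additive_real g ->
  sigma_additive_real (fun A => f A + g A).
Proof.
move=> hf hg F mF tF; under eq_fun do rewrite big_split.
exact: cvgD (hf F mF tF) (hg F mF tF).
Qed.

Lemma sigma_additive_realZ (k : R) (f : set T -> R) :
  sigma_additive_real f -> sigma_additive_real (fun A => k * f A).
Proof.
move=> hf F mF tF; under eq_fun do rewrite -mulr_sumr.
exact: cvgM (cvg_cst k) (hf F mF tF).
Qed.

Lemma sigma_additive_real_sum I (r : seq I) (f : I -> set T -> R) :
  (forall i, sigma_additive_real (f i)) ->
  sigma_additive_real (fun A => \sum_(i <- r) f i A).
Proof.
move=> hf; elim: r => [|i r IH].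
  move=> F _ _; rewrite big_nil.
  have -> : (fun n => \sum_(k < n) \sum_(i <- [::]) f i (F k)) = fun=> 0.
    by apply/funext => n; rewrite big1 // => k _; rewrite big_nil.
  exact: cvg_cst.
have -> : (fun A => \sum_(j <- i :: r) f j A) = fun A => f i A + \sum_(j <- r) f j A.
  by apply/funext => A; rewrite big_cons.
exact: sigma_additive_realD.
Qed.

Lemma sigma_additive_Rintegral (mu : {measure set T -> \bar R}) (D : set T)
    (g : T -> R) :
  measurable D -> mu.-integrable D (EFin \o g) ->
  sigma_additive_real (fun A => \int[mu]_(x in A `&` D) g x).
Proof.
move=> mD ig F mF tF.
have ig' : mu.-integrable setT ((EFin \o g) \_ D).
  by apply/integrable_restrict => //; rewrite setTI.
have E A : measurable A ->
    induced_charge ig' A = (\int[mu]_(x in A `&` D) g x)%:E.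
  move=> mA; rewrite /induced_charge -integral_mkcondr fineK //.
  apply: integrable_fin_num; first exact: measurableI.
  by apply: integrableS ig => //; exact: measurableI.
have h : (fun n => \sum_(0 <= k < n) induced_charge ig' (F k))%E @ \oo -->
         induced_charge ig' (\bigcup_k F k).
  exact: (@charge_semi_sigma_additive _ _ _ (induced_charge ig') F mF tF
           (bigcup_measurable (fun k _ => mF k))).
rewrite E in h; last exact: bigcup_measurable.
have {}h : (fun n => (\sum_(k < n) \int[mu]_(x in F k `&` D) g x)%:E) @ \oo -->
           (\int[mu]_(x in \bigcup_k F k `&` D) g x)%:E.
  apply: cvg_trans h; apply: near_eq_cvg; apply: nearW => n.
  by rewrite big_mkord -sumEFin; apply: eq_bigr => k _; rewrite E.
exact: fine_cvg h.
Qed.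

End SigmaAdditiveReal.

Lemma sigma_additive_real_xsection {d1 d2} {T1 : measurableType d1}
    {T2 : measurableType d2} {R : realType} (f : set T2 -> R) (x : T1) :
  sigma_additive_real f -> sigma_additive_real (fun A => f (xsection A x)).
Proof.
move=> hf F mF tF; rewrite xsection_bigcup.
apply: hf; last exact: trivIset_xsection.
by move=> k; exact: measurable_xsection.
Qed.

Lemma complex_cvg_herm2 {R : realType} {a b c e : nat -> R} {la lb lc le : R} :
  a @ \oo --> la -> b @ \oo --> lb -> c @ \oo --> lc -> e @ \oo --> le ->
  forall i j : 'I_2,
    complex_cvg (fun n => herm2 (a n) (b n) (c n) (e n) i j) (herm2 la lb lc le i j).
Proof.
move=> ha hb hc he i j; split.
- have -> : (fun n => complex.Re (herm2 (a n) (b n) (c n) (e n) i j)) =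
            fun n => if i == j then (if i == 0 :> nat then a n else e n) else b n.
    by apply/funext => n; rewrite Re_herm2.
  by rewrite Re_herm2; case: (i == j); [case: (i == 0 :> nat)|].
- have -> : (fun n => complex.Im (herm2 (a n) (b n) (c n) (e n) i j)) =
            fun n => if i == j then 0 else if i == 0 :> nat then - c n else c n.
    by apply/funext => n; rewrite Im_herm2.
  rewrite Im_herm2; case: (i == j); first exact: cvg_cst.
  by case: (i == 0 :> nat); [exact: cvgN|].
Qed.

Lemma herm2_sigma_additive {d} {T : measurableType d} {R : realType}
    {a b c e : set T -> R} :
  sigma_additive_real a -> sigma_additive_real b ->
  sigma_additive_real c -> sigma_additive_real e ->
  forall F : nat -> set T, (forall k, measurable (F k)) -> trivIset setT F ->
  forall i j : 'I_2,
    complex_cvg (fun n => \sum_(k < n) herm2 (a (F k)) (b (F k)) (c (F k)) (e (F k)) i j)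
                (herm2 (a (\bigcup_k F k)) (b (\bigcup_k F k))
                       (c (\bigcup_k F k)) (e (\bigcup_k F k)) i j).
Proof.
move=> ha hb hc he F mF tF i j.
have -> : (fun n => \sum_(k < n) herm2 (a (F k)) (b (F k)) (c (F k)) (e (F k)) i j) =
          fun n => herm2 (\sum_(k < n) a (F k)) (\sum_(k < n) b (F k))
                         (\sum_(k < n) c (F k)) (\sum_(k < n) e (F k)) i j.
  by apply/funext => n; rewrite -summxE herm2_sum.
exact (complex_cvg_herm2 (ha F mF tF) (hb F mF tF) (hc F mF tF) (he F mF tF) i j).
Qed.

Section Herm2Integral.
Context {d : measure_display} {T : measurableType d} {R : realType}.
Variable mu : {measure set T -> \bar R}.

Definition herm2_integral (D : set T) (a b c e : T -> R) : 'M[R[i]]_2 :=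
  herm2 (\int[mu]_(x in D) a x) (\int[mu]_(x in D) b x)
        (\int[mu]_(x in D) c x) (\int[mu]_(x in D) e x).

Lemma psd_herm2_integral (D : set T) (a b c e : T -> R) :
  measurable D ->
  mu.-integrable D (EFin \o a) -> mu.-integrable D (EFin \o b) ->
  mu.-integrable D (EFin \o c) -> mu.-integrable D (EFin \o e) ->
  (forall x, D x -> psd (herm2 (a x) (b x) (c x) (e x))) ->
  psd (herm2_integral D a b c e).
Proof.
move=> mD ia ib ic ie psd_pt; apply/psd_herm2P => x0 y0 x1 y1.
have iZ f r : mu.-integrable D (EFin \o f) ->
    mu.-integrable D (EFin \o (fun x => f x * r)).
  by move=> i; exact (integrableZr mD r i).
have iD f g : mu.-integrable D (EFin \o f) -> mu.-integrable D (EFin \o g) ->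
    mu.-integrable D (EFin \o (fun x => f x + g x)).
  by move=> i j; exact (integrableD mD i j).
set X := x0 ^+ 2 + y0 ^+ 2; set Y := x1 ^+ 2 + y1 ^+ 2.
set p := x0 * x1 + y0 * y1; set q := x0 * y1 - y0 * x1.
have qformE x : herm2_qform (a x) (b x) (c x) (e x) x0 y0 x1 y1 =
    a x * X + e x * Y + (b x * (2 * p) + c x * (2 * q)).
  by rewrite /herm2_qform -/X -/Y -/p -/q; ring.
have -> : herm2_qform (\int[mu]_(x in D) a x) (\int[mu]_(x in D) b x)
    (\int[mu]_(x in D) c x) (\int[mu]_(x in D) e x) x0 y0 x1 y1 =
    \int[mu]_(x in D) herm2_qform (a x) (b x) (c x) (e x) x0 y0 x1 y1.
  under [RHS]eq_Rintegral do rewrite qformE.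
  rewrite !RintegralD ?RintegralZr //; try by repeat apply: iD; apply: iZ.
  by rewrite /herm2_qform -/X -/Y -/p -/q; ring.
by apply: Rintegral_ge0 => x Dx; move: (psd_pt x Dx) => /psd_herm2P.
Qed.

Lemma herm2_integral_set0 (a b c e : T -> R) : herm2_integral set0 a b c e = 0.
Proof. by rewrite /herm2_integral !Rintegral_set0 herm20. Qed.

End Herm2Integral.

Section CircleIntegrals.
Context {R : realType}.
Local Notation mu := (@lebesgue_measure R).

Lemma pi2_neq0 : 2 * pi != 0 :> R.
Proof. by rewrite mulf_neq0 ?pnatr_eq0 // gt_eqF // pi_gt0. Qed.

Lemma measurable_I02pi : measurable (@I02pi R).
Proof. exact: measurable_itv. Qed.

Lemma continuous_scale_cos (k : R) : continuous (fun t : R => k * cos t).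
Proof. by move=> t; apply: cvgM; [exact: cvg_cst | exact: continuous_cos]. Qed.

Lemma continuous_scale_sin (k : R) : continuous (fun t : R => k * sin t).
Proof. by move=> t; apply: cvgM; [exact: cvg_cst | exact: continuous_sin]. Qed.

Lemma integrable_I02pi {g : R -> R} {X : set R} :
  continuous g -> measurable X -> X `<=` @I02pi R -> mu.-integrable X (EFin \o g).
Proof.
move=> cg mX XI; apply: (@integrableS _ _ _ mu `[0, 2 * pi]) => //.
- by apply: subset_trans XI _; apply/subset_itvP; exact: subset_itv_co_cc.
- apply: continuous_compact_integrable; first exact: segment_compact.
  exact: continuous_subspaceT.
Qed.

Lemma Rintegral_I02pi_derive (g G : R -> R) :
  continuous g -> (forall x : R, is_derive x (1 : R) G (g x)) ->
  \int[mu]_(x in @I02pi R) g x = G (2 * pi) - G 0.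
Proof.
move=> cg dG.
have cG : continuous G.
  by move=> x; apply/differentiable_continuous/derivable1_diffP; exact: ex_derive.
have pi2_gt0 : 0 < 2 * pi :> R by rewrite mulr_gt0 // pi_gt0.
rewrite /I02pi Rintegral_itv_bndo_bndc; last first.
  by apply: integrable_I02pi => //; exact: measurable_I02pi.
rewrite /Rintegral (@continuous_FTC2 _ g G _ _ pi2_gt0) //.
- exact: continuous_subspaceT.
- split; first by move=> x _; exact: ex_derive.
  + exact/cvg_at_right_filter/cG.
  + exact/cvg_at_left_filter/cG.
- by move=> x _; rewrite derive1E derive_val.
Qed.

Lemma Rintegral_I02pi_cst (r : R) : \int[mu]_(x in @I02pi R) r = r * (2 * pi).
Proof.
have dG (x : R) : is_derive x 1 ( *%R r) r.
  by rewrite -[r in is_derive _ _ _ r]mulr1; exact: is_deriveZ.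
by rewrite (@Rintegral_I02pi_derive (fun=> r) _ (@cst_continuous _ _ r) dG) mulr0 subr0.
Qed.

Lemma Rintegral_I02pi_cos : \int[mu]_(x in @I02pi R) cos x = 0 :> R.
Proof.
rewrite (@Rintegral_I02pi_derive _ sin) ?mulr_natl ?sin2pi ?sin0 ?subr0 //.
exact: continuous_cos.
Qed.

Lemma Rintegral_I02pi_sin : \int[mu]_(x in @I02pi R) sin x = 0 :> R.
Proof.
have dG (x : R) : is_derive x 1 (fun x => - cos x) (sin x).
  by rewrite -[sin x]opprK; exact: is_deriveN.
rewrite (@Rintegral_I02pi_derive _ _ (@continuous_sin R) dG).
by rewrite mulr_natl cos2pi cos0 subrr.
Qed.

Lemma herm2_integral_harmonic (X : set R) (a b e : R) :
  measurable X -> X `<=` @I02pi R ->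
  herm2_integral mu X (fun=> a) (fun t => b * cos t) (fun t => b * sin t) (fun=> e) =
  herm2 (a * \int[mu]_(t in X) 1) (b * \int[mu]_(t in X) cos t)
        (b * \int[mu]_(t in X) sin t) (e * \int[mu]_(t in X) 1).
Proof.
move=> mX XI; have i1 := integrable_I02pi (@cst_continuous R R 1) mX XI.
rewrite /herm2_integral -!RintegralZl //.
- by congr herm2; apply: eq_Rintegral => t _; rewrite mulr1.
- exact: integrable_I02pi (@continuous_sin R) mX XI.
- exact: integrable_I02pi (@continuous_cos R) mX XI.
Qed.

End CircleIntegrals.

Lemma sqrt2_noise_bound {R : realType} (eps : R) :
  eps <= 1 -> 1 - (Num.sqrt 2)^-1 <= eps -> 2 * (1 - eps) ^+ 2 <= 1.
Proof.
move=> e1 he.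
have s2 : Num.sqrt 2 ^+ 2 = 2 :> R by rewrite sqr_sqrtr.
have s0 : 0 < Num.sqrt 2 :> R by rewrite sqrtr_gt0.
have : (1 - eps) ^+ 2 <= (Num.sqrt 2)^-1 ^+ 2.
  have : 0 <= (Num.sqrt 2)^-1 :> R by rewrite invr_ge0 ltW.
  nra.
by rewrite exprVn s2 -(ler_pM2l (_ : 0 < 2)) // mulfV.
Qed.

Section NoisyPronoPhase.
Context {R : realType} (eps : R).
Local Notation mu := (@lebesgue_measure R).
Local Notation II := (@I02pi R).
Local Open Scope complex_scope.

Definition prono_weight (n : bool) : R := if n then eps / 2 else 1 - eps / 2.

Definition prono_phase_povm (S : set (bool * R)) : 'M[R[i]]_2 :=
  ((2 * pi)^-1)%:C *: \sum_(n : bool)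
    herm2_integral mu (xsection S n `&` II) (fun=> prono_weight n)
      (fun t => (1 - eps) / 2 * cos t) (fun t => (1 - eps) / 2 * sin t)
      (fun=> prono_weight (~~ n)).

Lemma Nprono_herm2 n : Nprono eps n = herm2 (prono_weight n) 0 0 (prono_weight (~~ n)).
Proof.
apply/matrixP => i j; case: n; rewrite !mxE;
case: i => [[|[|//]] ?]; case: j => [[|[|//]] ?] //=;
  by apply/eqP; rewrite eq_complex /= ?oppr0 ?eqxx.
Qed.

Lemma phi_density_herm2 t :
  phi_density eps t = herm2 1 ((1 - eps) * cos t) ((1 - eps) * sin t) 1.
Proof.
apply/matrixP => i j; rewrite !mxE.
case: i => [[|[|//]] ?]; case: j => [[|[|//]] ?] //=;
  by apply/eqP; rewrite eq_complex /= !mul0r ?subr0 ?addr0 ?mulrN !eqxx.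
Qed.

Lemma prono_phase_povm_total : prono_phase_povm (setT `*` II) = 1.
Proof.
rewrite /prono_phase_povm big_bool /= !in_xsectionX ?in_setT // setIid.
rewrite !(herm2_integral_harmonic _ _ _ _ measurable_I02pi (@subset_refl _ _)).
rewrite Rintegral_I02pi_cst Rintegral_I02pi_cos Rintegral_I02pi_sin.
rewrite herm2D herm2Z -herm2_1 /prono_weight /=.
(* Generalizing 2 pi keeps [field] from unfolding [pi]. *)
move: (2 * pi) (@pi2_neq0 R) => k k0.
by congr herm2; field.
Qed.

Lemma prono_phase_povm_number n : prono_phase_povm ([set n] `*` II) = Nprono eps n.
Proof.
have sec m : xsection ([set n] `*` II) m `&` II = if m == n then II else set0.
  case: eqP => [->|mn]; first by rewrite in_xsectionX ?setIid //; exact: mem_set.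
  by rewrite notin_xsectionX ?set0I //; apply/negP => /set_mem.
rewrite /prono_phase_povm big_bool /= !sec Nprono_herm2.
case: n {sec} => /=; rewrite herm2_integral_set0 ?addr0 ?add0r
  (herm2_integral_harmonic _ _ _ _ measurable_I02pi (@subset_refl _ _))
  Rintegral_I02pi_cst Rintegral_I02pi_cos Rintegral_I02pi_sin herm2Z;
  move: (2 * pi) (@pi2_neq0 R) => k k0; by congr herm2; field.
Qed.

Lemma Phi_herm2 (X : set R) : measurable X -> X `<=` II ->
  Phi eps X = ((2 * pi)^-1)%:C *: herm2 (\int[mu]_(t in X) 1)
    ((1 - eps) * \int[mu]_(t in X) cos t) ((1 - eps) * \int[mu]_(t in X) sin t)
    (\int[mu]_(t in X) 1).
Proof.
move=> mX XI; rewrite herm2Z; apply/matrixP => i j; rewrite !mxE.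
have ReE t : complex.Re (phi_density eps t i j) =
    if i == j then 1 else (1 - eps) * cos t.
  by rewrite phi_density_herm2 Re_herm2 if_same.
have ImE t : complex.Im (phi_density eps t i j) =
    if i == j then 0 * sin t
    else (if i == 0 :> nat then - (1 - eps) else 1 - eps) * sin t.
  by rewrite phi_density_herm2 Im_herm2 mul0r; do 2?case: ifP => _; rewrite ?mulNr.
under eq_Rintegral do rewrite ReE.
under [X in _ +i* (X / _)]eq_Rintegral do rewrite ImE.
have ic := integrable_I02pi (@continuous_cos R) mX XI.
have isn := integrable_I02pi (@continuous_sin R) mX XI.
case: i {ReE ImE} => [[|[|//]] ?]; case: j => [[|[|//]] ?] /=; apply/eqP;
  rewrite eq_complex /=; apply/andP; split; apply/eqP;
  rewrite ?RintegralZl // ?mul0r; ring.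
Qed.

Lemma prono_phase_povm_phase (X : set R) : measurable X -> X `<=` II ->
  prono_phase_povm (setT `*` X) = Phi eps X.
Proof.
move=> mX XI; rewrite /prono_phase_povm big_bool /= !in_xsectionX ?in_setT //.
rewrite setIidl // !herm2_integral_harmonic // herm2D Phi_herm2 //.
by congr (_ *: herm2 _ _ _ _); rewrite /prono_weight /=; field.
Qed.

Lemma psd_prono_phase_density (n : bool) (t : R) :
  0 <= eps <= 1 -> 2 * (1 - eps) ^+ 2 <= 1 ->
  psd (herm2 (prono_weight n) ((1 - eps) / 2 * cos t) ((1 - eps) / 2 * sin t)
             (prono_weight (~~ n))).
Proof.
move=> /andP[e0 e1] he; apply: psd_herm2; rewrite /prono_weight.
- by case: n => /=; lra.
- by case: n => /=; lra.
- have -> : ((1 - eps) / 2 * cos t) ^+ 2 + ((1 - eps) / 2 * sin t) ^+ 2 =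
            ((1 - eps) / 2) ^+ 2 by rewrite !exprMn -mulrDr cos2Dsin2 mulr1.
  have key : ((1 - eps) / 2) ^+ 2 <= eps / 2 * (1 - eps / 2).
    rewrite -subr_ge0.
    have -> : eps / 2 * (1 - eps / 2) - ((1 - eps) / 2) ^+ 2 =
              (1 - 2 * (1 - eps) ^+ 2) / 4 by field.
    by rewrite divr_ge0 // subr_ge0.
  by case: n => /=; last rewrite [X in _ <= X]mulrC.
Qed.

Lemma psd_prono_phase_povm S : 0 <= eps <= 1 -> 2 * (1 - eps) ^+ 2 <= 1 ->
  measurable S -> psd (prono_phase_povm S).
Proof.
move=> e01 he mS; apply: psdZ; first by rewrite invr_ge0 mulr_ge0 // pi_ge0.
apply: psd_sum => n.
have mSn : measurable (xsection S n `&` II).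
  by apply: measurableI; [exact: measurable_xsection | exact: measurable_I02pi].
apply: psd_herm2_integral => //.
- exact: integrable_I02pi (@cst_continuous R R _) mSn (@subIsetr _ _ _).
- exact: integrable_I02pi (continuous_scale_cos _) mSn (@subIsetr _ _ _).
- exact: integrable_I02pi (continuous_scale_sin _) mSn (@subIsetr _ _ _).
- exact: integrable_I02pi (@cst_continuous R R _) mSn (@subIsetr _ _ _).
- by move=> t _; exact: psd_prono_phase_density.
Qed.

Lemma prono_phase_povm_sigma_additive (F : nat -> set (bool * R)) :
  (forall k, measurable (F k)) -> trivIset setT F ->
  forall i j : 'I_2,
    complex_cvg (fun n => \sum_(k < n) prono_phase_povm (F k) i j)
                (prono_phase_povm (\bigcup_k F k) i j).
Proof.
move=> mF tF i j.
pose coord (g : bool -> R -> R) (S : set (bool * R)) :=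
  (2 * pi)^-1 * \sum_(n : bool) \int[mu]_(t in xsection S n `&` II) g n t.
have sa g : (forall n, continuous (g n)) -> sigma_additive_real (coord g).
  move=> cg; apply: sigma_additive_realZ; apply: sigma_additive_real_sum => n.
  apply: (sigma_additive_real_xsection (fun X => \int[mu]_(t in X `&` II) g n t)).
  exact (sigma_additive_Rintegral mu _ _ measurable_I02pi
           (integrable_I02pi (cg n) measurable_I02pi (@subset_refl _ _))).
have ME : prono_phase_povm = fun S => herm2 (coord (fun n _ => prono_weight n) S)
    (coord (fun _ t => (1 - eps) / 2 * cos t) S) (coord (fun _ t => (1 - eps) / 2 * sin t) S)
    (coord (fun n _ => prono_weight (~~ n)) S).
  by apply/funext => S; rewrite /prono_phase_povm /herm2_integral herm2_sum herm2Z.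
rewrite ME; exact (herm2_sigma_additive
  (sa _ (fun=> @cst_continuous R R _)) (sa _ (fun=> continuous_scale_cos _))
  (sa _ (fun=> continuous_scale_sin _)) (sa _ (fun=> @cst_continuous R R _)) F mF tF i j).
Qed.

End NoisyPronoPhase.

Theorem mainTheorem9 (R : realType) (eps : R) :
  0 <= eps <= 1 -> 1 - (Num.sqrt 2)^-1 <= eps ->
  jointly_measurable_prono_phase eps.
Proof.
move=> e01 he; have /andP[_ e1] := e01.
have noise := sqrt2_noise_bound eps e1 he.
exists (prono_phase_povm eps); split; first split.
- exact: prono_phase_povm_total.
- by move=> A mA _; exact: psd_prono_phase_povm.
- by move=> F mF _ tF; exact: prono_phase_povm_sigma_additive.
- exact: prono_phase_povm_number.
- exact: prono_phase_povm_phase.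
Qed.
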